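(* Let $\pi$ be a $k$-permutation and $i,j\in\mathbb{N}_0$. If $i\le k-2$ and $j\le k-2$, then $$c_{i,j}(P_\pi)=\frac{k!\,(-1)^{i+j}}{i!\,j!\,(k-i-2)!\,(k-j-2)!}\left(\mathbf{b}_{i+2}^T\,A_\pi\,\mathbf{b}_{j+2}\right),$$ and otherwise $c_{i,j}(P_\pi)=0$.
   Context: A $k$-permutation is a bijection of $[k]=\{1,\dots,k\}$. Its gradient polynomial is $P_\pi(\alpha,\beta)=k!\sum_{m\in[k]}\left(\frac{k-m}{1-\alpha}-\frac{m-1}{\alpha}\right)\left(\frac{k-\pi(m)}{1-\beta}-\frac{\pi(m)-1}{\beta}\right)\frac{\alpha^{m-1}(1-\alpha)^{k-m}\beta^{\pi(m)-1}(1-\beta)^{k-\pi(m)}}{(m-1)!(k-m)!(\pi(m)-1)!(k-\pi(m))!}$ (a polynomial in $\alpha,\beta$). For a polynomial $P(\alpha,\beta)$, $c_{i,j}(P)$ is the coefficient of $\alpha^i\beta^j$. The permutation matrix $A_\pi\in\mathbb{R}^{k\times k}$ has $(A_\pi)_{i,j}=1$ if $\pi(i)=j$ and $0$ otherwise. For $a\in[k]$, $\mathbf{b}_a=\mathbf{b}^k_a\in\mathbb{R}^k$ is the column vector with $(\mathbf{b}_a)_\ell=(-1)^{\ell-1}\binom{a-1}{\ell-1}$ for $1\le\ell\le a$ and $(\mathbf{b}_a)_\ell=0$ for $\ell>a$. *)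

From HB Require Import structures.
From mathcomp Require Import all_boot all_order all_algebra all_fingroup.
Set Implicit Arguments. Unset Strict Implicit. Unset Printing Implicit Defensive.
Import Order.TTheory GRing.Theory Num.Theory.
Local Open Scope ring_scope.

(* Convention: [k] = {1,...,k} is represented by 'I_k = {0,...,k-1};
   the element m : 'I_k stands for m+1 in [k]. A k-permutation is pi : 'S_k. *)

(* The gradient polynomial P_pi(alpha,beta), as the rational expression of the
   paper (valid for alpha, beta not in {0,1}). With m' = m+1:
   k-m' = k-m-1, m'-1 = m, pi(m')-1 = pi m, k-pi(m') = k - pi m - 1. *)
Definition gradP (R : realFieldType) (k : nat) (pi : 'S_k) (a b : R) : R :=
  (k`!)%:R * \sum_(m < k)
    (((k - m.+1)%:R / (1 - a) - m%:R / a) *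
     ((k - (pi m).+1)%:R / (1 - b) - (pi m)%:R / b) *
     (a ^+ m * (1 - a) ^+ (k - m.+1) * b ^+ (pi m) * (1 - b) ^+ (k - (pi m).+1)) /
     ((m`!)%:R * ((k - m.+1)`!)%:R * ((pi m)`!)%:R * ((k - (pi m).+1)`!)%:R)).

(* Bivariate polynomials in alpha, beta are {poly {poly R}}: outer variable beta,
   inner variable alpha; p evaluated at (a,b) is p.[b%:P].[a].
   c_{i,j}(p) = coefficient of alpha^i beta^j. *)
Definition coef2 (R : ringType) (p : {poly {poly R}}) (i j : nat) : R :=
  (p`_j)`_i.

(* b^k_a : column vector with entry l (1-based) equal to (-1)^(l-1) C(a-1,l-1)
   for l <= a and 0 for l > a. Here l is 0-based. *)
Definition bvec (R : ringType) (k a : nat) : 'cV[R]_k :=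
  \col_(l < k) (if (l < a)%N then (-1) ^+ l * ('C(a.-1, l))%:R else 0).

Definition Aperm (R : ringType) (k : nat) (pi : 'S_k) : 'M[R]_k :=
  \matrix_(i < k, j < k) (if pi i == j then 1 else 0).

(* Every summand of P_pi splits as k! D_m(alpha) D_(pi m)(beta), where D_m is the
   derivative of alpha^m (1-alpha)^(k-1-m) / (m! (k-1-m)!): the rational factors
   of the paper are its logarithmic derivative.  Expanding (1-alpha)^(k-1-m)
   binomially, the coefficient of alpha^i in D_m is -(-1)^i / (i! (k-i-2)!) times
   the m-th entry of b_(i+2) (and 0 when i > k-2), so c_(i,j) is the bilinear
   form b_(i+2)^T A_pi b_(j+2) up to that scalar.  P is identified with this
   polynomial because both agree on the infinite grid {2, 3, ...}^2. *)

From HB Require Import structures.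
From mathcomp Require Import all_boot all_order all_algebra all_fingroup.
From mathcomp Require Import ring zify.
Set Implicit Arguments.
Unset Strict Implicit.
Unset Printing Implicit Defensive.

Import Order.TTheory GRing.Theory Num.Theory.
Local Open Scope ring_scope.

Section PolynomialIdentity.
Variable R : idomainType.
Variables (f : nat -> R) (f_inj : injective f).

Lemma poly_eq0_inj_roots (p : {poly R}) : (forall n, root p (f n)) -> p = 0.
Proof.
move=> p_f; apply: (@roots_geq_poly_eq0 _ _ [seq f n | n <- iota 0 (size p)]).
- by apply/allP => _ /mapP [n _ ->].
- by rewrite map_inj_uniq ?iota_uniq.
- by rewrite size_map size_iota.
Qed.

Lemma poly2_eq0_inj_roots (u : {poly {poly R}}) :
  (forall m n, u.[f n, f m] = 0) -> u = 0.
Proof.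
move=> u_f; apply/eqP; rewrite -swapXY_eq0; apply/eqP/polyP => i; rewrite coef0.
apply: poly_eq0_inj_roots => n; apply/rootP.
have u_n : u.[(f n)%:P] = 0 by apply: poly_eq0_inj_roots => m; apply/rootP.
by have := congr1 (fun q : {poly R} => q`_i) u_n; rewrite horner_polyC coef_map coef0.
Qed.

End PolynomialIdentity.

Lemma coef_1subX_exp (R : comNzRingType) r t :
  ((1 - 'X : {poly R}) ^+ r)`_t = (-1) ^+ t * ('C(r, t))%:R.
Proof.
elim: r t => [|r IH] t.
  by rewrite expr0 coef1; case: t => [|t]; rewrite ?bin0 ?bin0n ?mulr0 ?mulr1.
rewrite exprS mulrBl mul1r coefB coefXM IH.
case: t => [|t] /=; first by rewrite !bin0 subr0.
by rewrite IH binS natrD exprS; ring.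
Qed.

Lemma horner_deriv_Xn_1subX (R : fieldType) m r (a : R) :
  a != 0 -> 1 - a != 0 ->
  ('X^m * (1 - 'X) ^+ r)^`().[a] = (m%:R / a - r%:R / (1 - a)) * (a ^+ m * (1 - a) ^+ r).
Proof.
move=> a0 a1; have predMn (x : R) n : x != 0 -> x ^+ n.-1 *+ n = n%:R / x * x ^+ n.
  by case: n => [|n] x0; rewrite ?mul0r ?mulr0n // exprS; field.
rewrite derivM derivXn deriv_exp derivB derivC derivX sub0r mulNr mul1r.
rewrite hornerD !hornerM !hornerMn hornerXn hornerN !horner_exp hornerD hornerN hornerC hornerX mulNrn !predMn //.
by ring.
Qed.

Lemma bilinear_Aperm (R : nzRingType) k (pi : 'S_k) (u v : 'cV[R]_k) :
  (u^T *m Aperm R pi *m v) 0 0 = \sum_(m < k) u m 0 * v (pi m) 0.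
Proof.
rewrite mxE; under eq_bigr do rewrite mxE mulr_suml.
rewrite exchange_big /=; apply: eq_bigr => m _.
rewrite (bigD1 (pi m)) //= !mxE eqxx mulr1 big1 ?addr0 // => l /negbTE pi_m_l.
by rewrite !mxE eq_sym pi_m_l mulr0 mul0r.
Qed.

Section Bernstein.
Variable R : numFieldType.

Lemma natr_fact_neq0 n : (n`!)%:R != 0 :> R.
Proof. by rewrite pnatr_eq0 -lt0n fact_gt0. Qed.

Lemma natr_bin n t : (t <= n)%N ->
  ('C(n, t))%:R = (n`!)%:R / ((t`!)%:R * ((n - t)`!)%:R) :> R.
Proof.
move=> le_tn; rewrite -(bin_fact le_tn) !natrM mulfK //.
by rewrite mulf_neq0 ?natr_fact_neq0.
Qed.

Definition bern (k m : nat) : {poly R} :=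
  ((m`!)%:R * ((k - m.+1)`!)%:R)^-1 *: ('X^m * (1 - 'X) ^+ (k - m.+1)).

Lemma horner_deriv_bern k m (a : R) : a != 0 -> a != 1 ->
  (bern k m)^`().[a] =
    - (((k - m.+1)%:R / (1 - a) - m%:R / a) * (a ^+ m * (1 - a) ^+ (k - m.+1)))
    / ((m`!)%:R * ((k - m.+1)`!)%:R).
Proof.
move=> a0 a1; rewrite derivZ hornerZ horner_deriv_Xn_1subX // ?subr_eq0 1?eq_sym //.
by ring.
Qed.

Lemma coef_deriv_bern k (m : 'I_k) i :
  (bern k m)^`()`_i =
  if (i + 2 <= k)%N then
    - (-1) ^+ i / ((i`!)%:R * ((k - i - 2)`!)%:R) * bvec R k (i + 2) m 0
  else 0.
Proof.
have lt_mk := ltn_ord m.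
rewrite coef_deriv coefZ coefXnM coef_1subX_exp mxE addn2 /=.
case: (ltnP i.+1 m) => [lt_i1m | le_mi1].
  by rewrite (leq_gtF lt_i1m) mulr0 mul0rn mulr0 if_same.
case: (leqP i.+2 k) => [le_i2k | lt_ki2]; last first.
  by rewrite bin_small ?mulr0 ?mul0rn ?mulr0 //; lia.
rewrite (le_mi1 : (m < i.+2)%N) !natr_bin //; last by lia.
have -> : (k - m.+1 - (i.+1 - m) = k - i - 2)%N by lia.
rewrite -signr_odd oddB // signr_addb !signr_odd exprS factS natrM -[_ *+ i.+1]mulr_natr.
by field; rewrite !natr_fact_neq0.
Qed.

End Bernstein.

Section GradientPolynomial.
Variables (R : realFieldType) (k : nat) (pi : 'S_k).

Definition gradPoly : {poly {poly R}} :=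
  \sum_(m < k) ((k`!)%:R *: (bern R k m)^`())%:P * ((bern R k (pi m))^`())^:P.

Lemma horner2_gradPoly (a b : R) : a != 0 -> a != 1 -> b != 0 -> b != 1 ->
  gradPoly.[b, a] = gradP pi a b.
Proof.
move=> a0 a1 b0 b1; rewrite /gradPoly /gradP !horner_sum mulr_sumr.
apply: eq_bigr => m _; rewrite hornerM hornerC horner_map /= hornerM !hornerC hornerZ.
rewrite !horner_deriv_bern //; field.
by rewrite !natr_fact_neq0 a0 b0 !subr_eq0 ![1 == _]eq_sym a1 b1.
Qed.

Lemma coef2_gradPoly i j :
  coef2 gradPoly i j = \sum_(m < k) (k`!)%:R * (bern R k m)^`()`_i * (bern R k (pi m))^`()`_j.
Proof.
rewrite /coef2 /gradPoly coef_sum coef_sum; apply: eq_bigr => m _.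
by rewrite coefCM coef_map /= coefMC coefZ.
Qed.

End GradientPolynomial.

Theorem lemma7 (R : realFieldType) (k : nat) (pi : 'S_k)
  (P : {poly {poly R}})
  (hP : forall a b : R, a != 0 -> a != 1 -> b != 0 -> b != 1 ->
          P.[b%:P].[a] = gradP pi a b)
  (i j : nat) :
  coef2 P i j =
  if ((i + 2 <= k)%N && (j + 2 <= k)%N) then
    (k`!)%:R * (-1) ^+ (i + j) /
      ((i`!)%:R * (j`!)%:R * ((k - i - 2)`!)%:R * ((k - j - 2)`!)%:R) *
    (((bvec R k (i + 2))^T *m Aperm R pi *m bvec R k (j + 2)) 0 0)
  else 0.
Proof.
have -> : P = gradPoly R pi.
  apply/eqP; rewrite -subr_eq0; apply/eqP.
  pose f n : R := (n + 2)%:R.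
  have f_inj : injective f by move=> m n /eqP; rewrite eqr_nat eqn_add2r => /eqP.
  have f_neq01 n : (f n != 0) && (f n != 1) by rewrite pnatr_eq0 pnatr_eq1 addn2.
  apply: (poly2_eq0_inj_roots f_inj) => m n.
  have /andP [fm0 fm1] := f_neq01 m; have /andP [fn0 fn1] := f_neq01 n.
  by rewrite !hornerE hP // horner2_gradPoly // subrr.
rewrite coef2_gradPoly bilinear_Aperm mulr_sumr.
case: (boolP (i + 2 <= k)%N) => hi /=; last first.
  by rewrite big1 // => m _; rewrite coef_deriv_bern (negbTE hi) mulr0 mul0r.
case: (boolP (j + 2 <= k)%N) => hj /=; last first.
  by rewrite big1 // => m _; rewrite !coef_deriv_bern (negbTE hj) mulr0.
apply: eq_bigr => m _; rewrite !coef_deriv_bern hi hj exprD.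
by field; rewrite !natr_fact_neq0.
Qed.
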